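(* Let $G=H\oplus_2 K$ be a $2$-sum of $2$-connected cubic graphs $H$ and $K$, where $K$ is $3$-edge-colourable. Then $\pi(G)\ge 5$ if and only if $\pi(H)\ge 5$.
   Context: Graphs are finite; loops and multiple edges are allowed. For a bridgeless cubic graph $G$, the perfect matching index $\pi(G)$ is the smallest number of perfect matchings of $G$ whose union is $E(G)$. A $2$-sum $H\oplus_2 K$ with distinguished edges $e\in E(H)$, $f\in E(K)$ is obtained by deleting $e$ and $f$ and joining the two $2$-valent vertices of $H-e$ to the two $2$-valent vertices of $K-f$ by two new independent edges. *)

From mathcomp Require Import all_boot.
Set Implicit Arguments. Unset Strict Implicit. Unset Printing Implicit Defensive.

(* A loop has equal endpoints;
   parallel edges are distinct edges with the same endpoints. *)
Record mgraph := MGraph {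
  vert : finType;
  edge : finType;
  ends : edge -> vert * vert
}.

Section Basics.
Variable G : mgraph.

Definition incident (x : edge G) (v : vert G) : bool :=
  ((ends x).1 == v) || ((ends x).2 == v).

Definition is_loop (x : edge G) : bool := (ends x).1 == (ends x).2.

(* degree; a loop counts twice *)
Definition deg (v : vert G) : nat :=
  #|[set x : edge G | (ends x).1 == v]| + #|[set x : edge G | (ends x).2 == v]|.

Definition cubic : Prop := forall v : vert G, deg v = 3.

Definition adj (u v : vert G) : bool :=
  [exists x : edge G, (ends x == (u, v)) || (ends x == (v, u))].

Definition connected_on (S : {set vert G}) : Prop :=
  forall u v, u \in S -> v \in S ->
    connect (fun a b => [&& a \in S, b \in S & adj a b]) u v.

Definition connected : Prop := connected_on setT.

Definition two_connected : Prop :=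
  [/\ forall x : edge G, ~~ is_loop x,
      connected &
      forall v : vert G, connected_on (setT :\ v)].

Definition three_edge_colourable : Prop :=
  exists c : edge G -> 'I_3,
    (forall x, ~~ is_loop x) /\
    (forall x y (v : vert G), x != y -> incident x v -> incident y v ->
        c x != c y).

Definition perfect_matching (M : {set edge G}) : Prop :=
  (forall x, x \in M -> ~~ is_loop x) /\
  (forall v : vert G, #|[set x in M | incident x v]| = 1).

Definition pm_cover (k : nat) : Prop :=
  exists M : 'I_k -> {set edge G},
    (forall i, perfect_matching (M i)) /\ (forall x, exists i, x \in M i).

(* pi(G) >= n : every cover of E(G) by perfect matchings uses >= n of them *)
Definition pmi_ge (n : nat) : Prop := forall k, pm_cover k -> n <= k.

End Basics.

(* 2-sum H (+)_2 K along e in E(H) with ends (a,b) and f in E(K) with ends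
   (c,d): delete e and f, add two new independent edges.  If swap = false
   the new edges are ac and bd; if swap = true they are ad and bc. *)
Section TwoSum.
Variables (H K : mgraph) (e : edge H) (f : edge K) (swap : bool).

Definition ts_vert : finType := (vert H + vert K)%type.
Definition ts_edge : finType :=
  ({x : edge H | x != e} + {y : edge K | y != f} + bool)%type.

Definition ts_ends (z : ts_edge) : ts_vert * ts_vert :=
  match z with
  | inl (inl x) => (inl (ends (val x)).1, inl (ends (val x)).2)
  | inl (inr y) => (inr (ends (val y)).1, inr (ends (val y)).2)
  | inr false => (inl (ends e).1,
                  inr (if swap then (ends f).2 else (ends f).1))
  | inr true => (inl (ends e).2,
                 inr (if swap then (ends f).1 else (ends f).2))
  end.

Definition two_sum : mgraph := @MGraph ts_vert ts_edge ts_ends.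
End TwoSum.

(* Since H has an even number of vertices and the two new edges form the cut
   between the H-side and the K-side of G, every perfect matching of G contains
   both or neither of them; replacing that pair by e restricts it to a perfect
   matching of H.  Conversely, in a cover of H by perfect matchings those
   avoiding e contain one of the two other edges x, y at an end of e, and both
   kinds occur.  Extending the matchings containing e by the colour class of f,
   those containing x by a second colour class and the others by the third
   covers G. *)

From mathcomp Require Import all_boot.
Set Implicit Arguments. Unset Strict Implicit. Unset Printing Implicit Defensive.

Lemma sum_card_exchange (T U : finType) (A : {set T}) (P : T -> U -> bool) :
  \sum_(u : U) #|[set t in A | P t u]| = \sum_(t in A) #|[set u | P t u]|.
Proof.
transitivity (\sum_(u : U) \sum_(t in A) (P t u : nat)).
  apply: eq_bigr => u _; rewrite -sum1_card big_mkcond [RHS]big_mkcond.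
  by apply: eq_bigr => t _; rewrite inE; case: (t \in A); case: P.
rewrite exchange_big; apply: eq_bigr => t _; rewrite -sum1_card [RHS]big_mkcond.
by apply: eq_bigr => u _; rewrite inE; case: P.
Qed.

Lemma sum_card_preim (T U : finType) (p : T -> U) :
  \sum_(u : U) #|[set x | p x == u]| = #|T|.
Proof.
rewrite -sum1_card (partition_big p predT) //; apply: eq_bigr => u _.
by rewrite -sum1_card; apply: eq_bigl => x; rewrite inE.
Qed.

Lemma sum_eq_pred1 (T : finType) (A : {set T}) (c : T) :
  \sum_(t in A) (t == c : nat) = (c \in A).
Proof.
case cA: (c \in A); first by rewrite (bigD1 c) //= eqxx big1 // => t /andP[_ /negbTE->].
by rewrite big1 // => t tA; case: eqP => // tc; rewrite -tc tA in cA.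
Qed.

Lemma card3_other (T : finType) (A : {set T}) (a : T) : #|A| = 3 -> a \in A ->
  exists x y, [/\ x != a, y != a, x != y & A = [set a; x; y]].
Proof.
move=> cardA aA; have /cards2P[x [y [xy EA]]] : #|A :\ a| == 2.
  by move: (cardsD1 a A); rewrite cardA aA => -[->].
have /setD1P[xa _] : x \in A :\ a by rewrite EA !inE eqxx.
have /setD1P[ya _] : y \in A :\ a by rewrite EA !inE eqxx orbT.
by exists x, y; split; rewrite // -setUA -EA setD1K.
Qed.

Section PerfectMatchings.
Variable G : mgraph.
Implicit Types (M N : {set edge G}) (v : vert G).

Lemma card_incident_loopless v : (forall x : edge G, ~~ is_loop x) ->
  #|[set x : edge G | incident x v]| = deg v.
Proof.
move=> loopless; rewrite /deg -cardsUI.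
set A1 := [set x | _ == v]; set A2 := [set x | _ == v].
have -> : A1 :&: A2 = set0.
  apply/setP=> x; rewrite !inE; apply/negbTE/andP=> -[/eqP e1 /eqP e2].
  by move: (loopless x); rewrite /is_loop e1 e2 eqxx.
by rewrite cards0 addn0; apply: eq_card => x; rewrite !inE.
Qed.

Lemma sum_deg : \sum_(v : vert G) deg v = (#|edge G|).*2.
Proof. by rewrite big_split /= !sum_card_preim addnn. Qed.

Lemma cubic_even_order : cubic G -> ~~ odd #|vert G|.
Proof.
move=> cubG; have := congr1 odd sum_deg.
by rewrite (eq_bigr (fun _ => 3)) // sum_nat_const odd_double oddM andbT => ->.
Qed.

Lemma pm_incident_uniq M v x y : perfect_matching M ->
  x \in M -> y \in M -> incident x v -> incident y v -> x = y.
Proof.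
move=> [_ pmM] xM yM xv yv; have /cards1P[z Ez] := introT eqP (pmM v).
have : x \in [set z] by rewrite -Ez inE xM xv.
have : y \in [set z] by rewrite -Ez inE yM yv.
by rewrite !inE => /eqP-> /eqP->.
Qed.

Lemma pm_incident_notin M v x y : perfect_matching M ->
  x \in M -> incident x v -> incident y v -> x != y -> y \notin M.
Proof.
move=> pmM xM xv yv; apply: contra => yM; apply/eqP.
exact: pm_incident_uniq pmM xM yM xv yv.
Qed.

Lemma card_pm_double_count (T : finType) (p : T -> vert G) N :
  perfect_matching N -> #|T| = \sum_(z in N) #|[set t | incident z (p t)]|.
Proof.
move=> [_ pmN]; rewrite -sum_card_exchange -sum1_card.
by apply: eq_bigr => t _; rewrite pmN.
Qed.

Lemma colour_class_pm k (c : edge G -> 'I_k) j :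
  (forall v : vert G, deg v = k) -> (forall x : edge G, ~~ is_loop x) ->
  (forall x y (v : vert G), x != y -> incident x v -> incident y v -> c x != c y) ->
  perfect_matching [set x | c x == j].
Proof.
move=> regG loopless proper_c; split=> [x _ | w]; first exact: loopless.
set I := [set x | incident x w].
have inj_c : {in I &, injective c}.
  move=> x y; rewrite !inE => xw yw.
  by apply: contra_eq => xy; apply: proper_c xw yw.
have /imsetP[x0 x0w ->] : j \in c @: I.
  suff -> : c @: I = setT by rewrite inE.
  apply/eqP; rewrite eqEcard subsetT cardsT card_ord card_in_imset //.
  by rewrite card_incident_loopless ?regG ?leqnn.
rewrite inE in x0w.
suff -> : [set x in [set x | c x == c x0] | incident x w] = [set x0] by rewrite cards1.
apply/setP=> x; rewrite !inE; apply/idP/eqP=> [/andP[/eqP cx xw] | ->].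
  by apply: inj_c; rewrite ?inE.
by rewrite eqxx.
Qed.

End PerfectMatchings.

Lemma card_incident_transfer (G1 G2 : mgraph) (h : edge G1 -> edge G2)
    (M1 : {set edge G1}) (M2 : {set edge G2}) (v1 : vert G1) (v2 : vert G2) :
  injective h -> (forall x, (h x \in M2) = (x \in M1)) ->
  (forall x, incident (h x) v2 = incident x v1) ->
  (forall z, incident z v2 -> exists x, z = h x) ->
  #|[set z in M2 | incident z v2]| = #|[set x in M1 | incident x v1]|.
Proof.
move=> inj_h mem_h incident_h onto_h; rewrite -(card_imset _ inj_h).
apply: eq_card => z; rewrite !inE; apply/andP/imsetP=> [[zM zv] | [x + ->]].
  have [x zx] := onto_h z zv; rewrite zx in zM zv.
  by exists x; rewrite // inE -mem_h -incident_h zM zv.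
by rewrite inE mem_h incident_h => /andP.
Qed.

Section TwoSum.
Variables (H K : mgraph) (e : edge H) (f : edge K) (swap : bool).
Local Notation G := (two_sum e f swap).
Hypothesis H_loopless : forall x : edge H, ~~ is_loop x.
Hypothesis K_loopless : forall y : edge K, ~~ is_loop y.

Definition hend (b : bool) : vert H := if b then (ends e).2 else (ends e).1.
Definition kend (b : bool) : vert K :=
  if b (+) swap then (ends f).2 else (ends f).1.

Lemma ends_new b : ends (inr b : edge G) = (inl (hend b), inr (kend b)).
Proof. by case: b; rewrite /kend /= ?if_neg. Qed.

Lemma incident_new_H b v : incident (inr b : edge G) (inl v) = (v == hend b).
Proof. by rewrite /incident ends_new /= orbF eq_sym. Qed.

Lemma incident_new_K b w : incident (inr b : edge G) (inr w) = (w == kend b).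
Proof. by rewrite /incident ends_new /= eq_sym. Qed.

Lemma incident_e v : incident e v = (v == hend false) || (v == hend true).
Proof. by rewrite /incident !(eq_sym v). Qed.

Lemma incident_f w : incident f w = (w == kend false) || (w == kend true).
Proof. by rewrite /incident /kend; case: swap; rewrite !(eq_sym w) // orbC. Qed.

Lemma hend_inj : injective hend.
Proof.
have /negbTE e_ends : (ends e).1 != (ends e).2 := H_loopless e.
by move=> [] [] // /eqP; rewrite /hend ?e_ends // eq_sym e_ends.
Qed.

Lemma kend_inj : injective kend.
Proof.
have /negbTE f_ends : (ends f).1 != (ends f).2 := K_loopless f.
by move=> [] [] // /eqP; rewrite /kend /=;
  case: swap; rewrite ?f_ends // eq_sym f_ends.
Qed.

Definition lift_H (b : bool) (x : edge H) : edge G :=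
  if insub x is Some x' then inl (inl x') else inr b.
Definition lift_K (b : bool) (y : edge K) : edge G :=
  if insub y is Some y' then inl (inr y') else inr b.

Lemma lift_H_e b : lift_H b e = inr b.
Proof. by rewrite /lift_H insubF ?eqxx. Qed.
Lemma lift_K_f b : lift_K b f = inr b.
Proof. by rewrite /lift_K insubF ?eqxx. Qed.

Lemma lift_H_ne b x (xe : x != e) : lift_H b x = inl (inl (exist _ x xe)).
Proof. by rewrite /lift_H insubT. Qed.
Lemma lift_K_ne b y (yf : y != f) : lift_K b y = inl (inr (exist _ y yf)).
Proof. by rewrite /lift_K insubT. Qed.

Lemma lift_H_inj b : injective (lift_H b).
Proof.
move=> x1 x2; case: (eqVneq x1 e) => [->|x1e]; case: (eqVneq x2 e) => [->|x2e] //;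
  rewrite ?lift_H_e ?lift_H_ne // => -[] //.
Qed.
Lemma lift_K_inj b : injective (lift_K b).
Proof.
move=> y1 y2; case: (eqVneq y1 f) => [->|y1f]; case: (eqVneq y2 f) => [->|y2f] //;
  rewrite ?lift_K_f ?lift_K_ne // => -[] //.
Qed.

Lemma incident_lift_H v x :
  incident (lift_H (v == hend true) x) (inl v) = incident x v.
Proof.
case: (eqVneq x e) => [->|xe]; last by rewrite lift_H_ne.
rewrite lift_H_e incident_new_H incident_e.
by case: (eqVneq v (hend true)) => [->|vt]; rewrite ?eqxx ?orbT ?orbF.
Qed.
Lemma incident_lift_K w y :
  incident (lift_K (w == kend true) y) (inr w) = incident y w.
Proof.
case: (eqVneq y f) => [->|yf]; last by rewrite lift_K_ne.
rewrite lift_K_f incident_new_K incident_f.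
by case: (eqVneq w (kend true)) => [->|wt]; rewrite ?eqxx ?orbT ?orbF.
Qed.

Lemma lift_H_onto v (z : edge G) :
  incident z (inl v) -> exists x, z = lift_H (v == hend true) x.
Proof.
case: z => [[x|//]|b]; first by exists (val x); rewrite /lift_H valK.
rewrite incident_new_H => /eqP->; exists e.
by rewrite lift_H_e (inj_eq hend_inj); case: b.
Qed.
Lemma lift_K_onto w (z : edge G) :
  incident z (inr w) -> exists y, z = lift_K (w == kend true) y.
Proof.
case: z => [[//|y]|b]; first by exists (val y); rewrite /lift_K valK.
rewrite incident_new_K => /eqP->; exists f.
by rewrite lift_K_f (inj_eq kend_inj); case: b.
Qed.

Definition is_H_edge (z : edge G) : bool := if z is inl (inl _) then true else false.

Lemma card_ends_H (z : edge G) :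
  #|[set v : vert H | incident z (inl v)]| =
    (is_H_edge z).*2 + (z == inr false) + (z == inr true).
Proof.
case: z => [[x|y]|b].
- have -> : [set v | incident (inl (inl x) : edge G) (inl v)] =
            [set (ends (val x)).1; (ends (val x)).2].
    by apply/setP=> v; rewrite !inE /incident !(eq_sym v).
  by rewrite cards2 H_loopless.
- by apply: eq_card0 => v; rewrite inE.
- have -> : [set v | incident (inr b : edge G) (inl v)] = [set hend b].
    by apply/setP=> v; rewrite !inE incident_new_H.
  by rewrite cards1; case: b.
Qed.

Lemma pm_new_edges (N : {set edge G}) : ~~ odd #|vert H| -> perfect_matching N ->
  (inr false \in N) = (inr true \in N).
Proof.
move=> evenH /(card_pm_double_count (inl : vert H -> vert G)) cardH.
rewrite (eq_bigr _ (fun z _ => card_ends_H z)) in cardH.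
move: evenH; rewrite cardH !big_split !sum_eq_pred1 -(big_morph double doubleD double0).
by rewrite !oddD odd_double; case: (inr false \in N); case: (inr true \in N).
Qed.

Definition restrict_H (N : {set edge G}) : {set edge H} := lift_H false @^-1: N.

Lemma restrict_H_pm N : ~~ odd #|vert H| -> perfect_matching N ->
  perfect_matching (restrict_H N).
Proof.
move=> evenH pmN; split=> [x _ | v]; first exact: H_loopless.
have mem_lift b x : (lift_H b x \in N) = (x \in restrict_H N).
  rewrite inE; case: (eqVneq x e) => [->|xe]; last by rewrite !lift_H_ne.
  by rewrite !lift_H_e; case: b; rewrite // (pm_new_edges evenH pmN).
rewrite -(card_incident_transfer (@lift_H_inj _) (mem_lift _)
          (@incident_lift_H v) (@lift_H_onto v)).
exact: pmN.2.
Qed.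

Definition glue (M : {set edge H}) (C : {set edge K}) : {set edge G} :=
  [set z : edge G | match z with
                    | inl (inl x) => val x \in M
                    | inl (inr y) => val y \in C
                    | inr _ => e \in M
                    end].

Lemma glue_pm M C : perfect_matching M -> perfect_matching C ->
  (e \in M) = (f \in C) -> perfect_matching (glue M C).
Proof.
move=> [_ pmM] [_ pmC] eMfC; split=> [[[x|y]|b] _ | [v|w]].
- exact: H_loopless.
- exact: K_loopless.
- by rewrite /is_loop ends_new.
- have mem_lift b x : (lift_H b x \in glue M C) = (x \in M).
    by case: (eqVneq x e) => [->|xe]; rewrite ?lift_H_e ?lift_H_ne inE.
  by rewrite (card_incident_transfer (@lift_H_inj _) (mem_lift _)
               (@incident_lift_H v) (@lift_H_onto v)).
- have mem_lift b y : (lift_K b y \in glue M C) = (y \in C).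
    by case: (eqVneq y f) => [->|yf]; rewrite ?lift_K_f ?lift_K_ne inE.
  by rewrite (card_incident_transfer (@lift_K_inj _) (mem_lift _)
               (@incident_lift_K w) (@lift_K_onto w)).
Qed.

Lemma pm_cover_restrict k : ~~ odd #|vert H| -> pm_cover G k -> pm_cover H k.
Proof.
move=> evenH [N [pmN coverN]]; exists (fun i => restrict_H (N i)).
split=> [i | x]; first exact: restrict_H_pm.
by have [i xN] := coverN (lift_H false x); exists i; rewrite inE.
Qed.

Lemma pm_cover_glue k : cubic H -> cubic K -> three_edge_colourable K ->
  pm_cover H k -> pm_cover G k.
Proof.
move=> cubH cubK [c [_ proper_c]] [M [pmM coverM]].
have [x [y [xe ye xy Ea]]] : exists x y, [/\ x != e, y != e, x != y &
    [set z | incident z (hend false)] = [set e; x; y]].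
  by apply: card3_other; rewrite ?card_incident_loopless ?inE ?incident_e ?eqxx.
have [ea xa ya] : [/\ incident e (hend false), incident x (hend false)
                    & incident y (hend false)].
  have : [&& e \in [set e; x; y], x \in [set e; x; y] & y \in [set e; x; y]].
    by rewrite !inE !eqxx !orbT.
  by rewrite -Ea !inE => /and3P.
have [jx [jy [jx_f jy_f _ Ecol]]] :=
  card3_other (etrans (cardsT _) (card_ord 3)) (in_setT (c f)).
pose col i := if e \in M i then c f else if x \in M i then jx else jy.
exists (fun i => glue (M i) [set z | c z == col i]); split=> [i | [[x'|y']|b]].
- apply: glue_pm; [exact: pmM | exact: colour_class_pm | ].
  rewrite inE /col; case: (e \in M i); first by rewrite eqxx.
  by case: (x \in M i); rewrite eq_sym ?(negbTE jx_f) ?(negbTE jy_f).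
- by have [i ?] := coverM (val x'); exists i; rewrite inE.
- have : c (val y') \in [set c f; jx; jy] by rewrite -Ecol inE.
  rewrite !inE -orbA; case/or3P => /eqP cy'.
  + by have [i eM] := coverM e; exists i; rewrite !inE /= /col eM cy'.
  + have [i xM] := coverM x; exists i.
    have /negbTE eM := pm_incident_notin (pmM i) xM xa ea xe.
    by rewrite !inE /= /col eM xM cy'.
  + have [i yM] := coverM y; exists i.
    have /negbTE eM := pm_incident_notin (pmM i) yM ya ea ye.
    have /negbTE xM : x \notin M i.
      by apply: pm_incident_notin (pmM i) yM ya xa _; rewrite eq_sym.
    by rewrite !inE /= /col eM xM cy'.
- by have [i eM] := coverM e; exists i; rewrite inE.
Qed.

Lemma pm_cover_two_sum k : cubic H -> cubic K -> three_edge_colourable K ->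
  pm_cover G k <-> pm_cover H k.
Proof.
move=> cubH cubK colK; split; first exact/pm_cover_restrict/cubic_even_order.
exact: pm_cover_glue.
Qed.

Lemma pmi_ge_two_sum n : cubic H -> cubic K -> three_edge_colourable K ->
  pmi_ge G n <-> pmi_ge H n.
Proof.
move=> cubH cubK colK.
by split=> ge_n k /(pm_cover_two_sum k cubH cubK colK); apply: ge_n.
Qed.
End TwoSum.

Theorem lemma6p4 (H K : mgraph) (e : edge H) (f : edge K) (swap : bool) :
  cubic H -> cubic K -> two_connected H -> two_connected K ->
  three_edge_colourable K ->
  (pmi_ge (two_sum e f swap) 5 <-> pmi_ge H 5).
Proof.
move=> cubH cubK [H_loopless _ _] [K_loopless _ _] colK.
exact: pmi_ge_two_sum.
Qed.
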